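(* Let $G$ be a finite graph with filtration function $f$. Then the forward persistence diagrams and the backward persistence diagrams of $(G,f)$ (in every homological degree) are determined by the FB-persistence diagrams of $(G,f)$. Moreover, FB-persistence is strictly more expressive than forward and backward persistence combined: there exist graphs $G, H$ and a permutation equivariant filtration (assigning filtration functions $f_G, f_H$) such that the forward persistence diagrams of $(G,f_G)$ and $(H,f_H)$ coincide in all degrees, the backward persistence diagrams coincide in all degrees, but the FB-persistence diagrams differ.
   Context: Graphs are finite, undirected, possibly with self-loops and multi-edges, and are regarded as topological spaces (1-dimensional cell complexes). A filtration function on $G=(V,E)$ is $f: V\cup E\to\mathbb{R}$ with $f(v)\le f(e)$ and $f(w)\le f(e)$ for every edge $e$ with endpoints $v,w$. If $a_0<\dots<a_n$ are the distinct values of $f$, put $G_{-1}=\emptyset$ and $G_i=f^{-1}((-\infty,a_i])$, a subgraph; so $\emptyset=G_{-1}\subset G_0\subset\dots\subset G_n=G$. The $i$-th intermediate complex $\mathrm{IC}_i(G,f)$ is the subgraph consisting of the vertices and edges in $G_i\setminus G_{i-1}$ together with all endpoints of those edges. For a sequence of spaces and continuous maps $X_0\to X_1\to\dots\to X_N$, applying $H_k(-;\mathbb{Z}/2)$ gives a persistence module; its $k$-th persistence diagram is the multiset of intervals $(b,d)$ ($d=\infty$ allowed) of its interval decomposition, with $b,d$ recorded as positions in the sequence; a leading $\emptyset$ term is discarded. Forward persistence of $(G,f)$: the diagrams of $G_0\subset G_1\subset\dots\subset G_n$ (inclusions). Backward persistence: the diagrams of the sequence of quotient maps $G\to Z_1:=G/\mathrm{IC}_n(G)\to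 Z_2:=Z_1/( *_1\cup \mathrm{IC}_{n-1}(G))\to\dots\to Z_{n+1}=\text{point}$, where $*_j$ denotes the point to which everything contracted so far has been collapsed (contracting $\mathrm{IC}_n,\mathrm{IC}_{n-1},\dots,\mathrm{IC}_0$ in turn). FB-persistence: the diagrams of the concatenated sequence $G_0\subset\dots\subset G_n=G\to Z_1\to\dots\to Z_{n+1}$. A permutation equivariant filtration is a rule assigning to each graph $G$ (possibly with vertex colors) a filtration function $f_G$ depending only on intrinsic features, i.e. $f_H\circ\varphi=f_G$ for every (color-preserving) isomorphism $\varphi:G\to H$; e.g. the degree filtration $f(v)=\deg v$, $f(e)=\max(f(v),f(w))$. *)

From HB Require Import structures.
From mathcomp Require Import all_boot all_order all_algebra.
From mathcomp Require Import reals.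
Set Implicit Arguments. Unset Strict Implicit. Unset Printing Implicit Defensive.
Import Order.TTheory GRing.Theory Num.Theory.
Local Open Scope ring_scope.

(* Finite undirected multigraphs (self-loops, multi-edges allowed).   *)
(* endpoints carries no meaning (isomorphisms may swap them).         *)
Record graph := Graph {
  gV : finType;
  gE : finType;
  gsrc : gE -> gV;
  gtgt : gE -> gV }.

Record filtration (R : realType) (g : graph) := Filtration {
  fv : gV g -> R;
  fe : gE g -> R;
  f_mono : forall e, fv (gsrc e) <= fe e /\ fv (gtgt e) <= fe e }.

Section Filt.
Variables (R : realType) (g : graph) (f : filtration R g).
Local Notation V := (gV g).
Local Notation E := (gE g).

Definition fvals : seq R :=
  sort <=%O (undup ([seq fv f v | v <- enum V] ++ [seq fe f e | e <- enum E])).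
(* number of distinct values = n + 1 *)
Definition nlev : nat := size fvals.
Definition lev (i : nat) : R := nth 0 fvals i.

(* A "subquotient" S/A of G : a subgraph S together with a subgraph A of S
   that is collapsed to a single point (A empty = no collapse). *)
Record sq := SQ { sqSV : {set V}; sqSE : {set E}; sqAV : {set V}; sqAE : {set E} }.

Definition Gsub (i : nat) : sq :=
  SQ [set v | fv f v <= lev i] [set e | fe f e <= lev i] set0 set0.

Definition ICE (i : nat) : {set E} := [set e | fe f e == lev i].
Definition ICV (i : nat) : {set V} :=
  [set v | fv f v == lev i] :|: ((@gsrc g) @: ICE i) :|: ((@gtgt g) @: ICE i).

(* Z_j = G / (IC_n ∪ ... ∪ IC_{n-j+1}), the union collapsed to one point
   (this is the space obtained by successively contracting
    IC_n, *_1 ∪ IC_{n-1}, ..., *_{j-1} ∪ IC_{n-j+1}). *)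
Definition Zq (j : nat) : sq :=
  SQ setT setT (\bigcup_(nlev - j <= i < nlev) ICV i)
               (\bigcup_(nlev - j <= i < nlev) ICE i).

Definition fwd_seq (p : nat) : sq := Gsub p.
(* backward: G -> Z_1 -> ... -> Z_{n+1}   (positions 0..n+1) *)
Definition bwd_seq (p : nat) : sq := Zq p.  (* Zq 0 = G *)
(* FB: G_0 -> ... -> G_n = G -> Z_1 -> ... -> Z_{n+1} (positions 0..2n+1) *)
Definition fb_seq (p : nat) : sq :=
  if (p < nlev)%N then Gsub p else Zq (p - nlev).+1.

(* 0-chains live in {ffun option V -> F_2} (None = the collapse point),*)
Local Notation K := 'F_2.
Definition CV := {ffun option V -> K^o}.
Definition CE := {ffun E -> K^o}.
Definition dV (x : option V) : CV := [ffun y => (y == x)%:R].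
Definition dE (e : E) : CE := [ffun y => (y == e)%:R].

Definition qv (A : {set V}) (v : V) : CV :=
  if v \in A then dV None else dV (Some v).

Definition C0 (X : sq) : {vspace CV} :=
  let gens := [seq dV (Some v) | v in (sqSV X :\: sqAV X)%SET] in
  (<<gens>> + (if sqAV X != set0 then <[dV None]> else 0))%VS.
Definition C1 (X : sq) : {vspace CE} :=
  let gens := [seq dE e | e in (sqSE X :\: sqAE X)%SET] in
  <<gens>>%VS.

Definition bd (A : {set V}) : 'Hom(CE, CV) :=
  linfun (fun c : CE => \sum_(e : E) c e *: (qv A (gsrc e) + qv A (gtgt e))).

Definition Z1 (X : sq) : {vspace CE} := (C1 X :&: lker (bd (sqAV X)))%VS.
Definition B0 (X : sq) : {vspace CV} := (bd (sqAV X) @: C1 X)%VS.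

(* chain map induced by the canonical continuous map S/A -> S'/A'
   (S ⊆ S', A ⊆ A'), i.e. inclusion followed by collapse of A' *)
Definition phi0 (Y : sq) : 'Hom(CV, CV) :=
  linfun (fun c : CV => \sum_(x : option V)
    c x *: (match x with None => dV None | Some v => qv (sqAV Y) v end)).
Definition phi1 (Y : sq) : 'Hom(CE, CE) :=
  linfun (fun c : CE => [ffun e => if e \in sqAE Y then 0 else c e]).

(* rank of the induced map H_k(X; Z/2) -> H_k(Y; Z/2)
   = dim ((phi(Z_k X) + B_k Y) / B_k Y); graphs have no 2-cells. *)
Definition hrank (k : nat) (X Y : sq) : nat :=
  match k with
  | 0 => (\dim (phi0 Y @: C0 X + B0 Y)%VS - \dim (B0 Y))%N
  | 1 => \dim (phi1 Y @: Z1 X)%VS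
  | _ => 0%N
  end.

End Filt.

(* A diagram is a multiplicity function on intervals (b, d), where b  *)
(* is the birth position and d = Some d' a (finite) death position    *)
(* (the class is alive at positions b..d'-1) or d = None (d = oo).    *)
(* For a persistence module indexed by 0..N with ranks r i j of the   *)
(* structure maps M_i -> M_j (i <= j), the interval multiplicities of *)
(* the interval decomposition are given by the rank inclusion–        *)
(* exclusion formula below.                                           *)
Definition diagram := nat -> option nat -> int.

Definition dgm_of_ranks (N : nat) (r : nat -> nat -> nat) : diagram :=
  fun b d =>
    let r' (i j : nat) : int := if i == 0%N then 0 else (r i.-1 j)%:Z in
    (* r' (i+1) j = r i j;  r' 0 j = 0  (rank "from position -1") *)
    match d with
    | None => if (b <= N)%N then (r b N)%:Z - r' b N else 0
    | Some d' =>
        if (b < d' <= N)%N then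
          (r b d'.-1)%:Z - r' b d'.-1 - (r b d')%:Z + r' b d'
        else 0
    end.

Definition pdgm (g : graph) (X : nat -> sq g) (N : nat) (k : nat) : diagram :=
  dgm_of_ranks N (fun i j => hrank k (X i) (X j)).

Definition fwd_dgm (R : realType) (g : graph) (f : filtration R g) (k : nat)
  : diagram := pdgm (fwd_seq f) (nlev f).-1 k.
Definition bwd_dgm (R : realType) (g : graph) (f : filtration R g) (k : nat)
  : diagram := pdgm (bwd_seq f) (nlev f) k.
Definition fb_dgm (R : realType) (g : graph) (f : filtration R g) (k : nat)
  : diagram := pdgm (fb_seq f) (nlev f + nlev f).-1 k.

Definition coloring (g : graph) := gV g -> nat.

Definition is_iso (g h : graph) (cg : coloring g) (ch : coloring h)
    (pV : gV g -> gV h) (pE : gE g -> gE h) : Prop :=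
  bijective pV /\ bijective pE /\
  (forall v, ch (pV v) = cg v) /\
  (forall e, (gsrc (pE e) = pV (gsrc e) /\ gtgt (pE e) = pV (gtgt e)) \/
             (gsrc (pE e) = pV (gtgt e) /\ gtgt (pE e) = pV (gsrc e))).

Definition filt_rule (R : realType) :=
  forall (g : graph) (c : coloring g), filtration R g.

Definition perm_equivariant (R : realType) (F : filt_rule R) : Prop :=
  forall (g h : graph) (cg : coloring g) (ch : coloring h) pV pE,
    is_iso cg ch pV pE ->
    (forall v, fv (F h ch) (pV v) = fv (F g cg) v) /\
    (forall e, fe (F h ch) (pE e) = fe (F g cg) e).

(* A persistence diagram over positions 0..N determines the ranks r i j of all
   structure maps, since the number of its intervals containing [i, j] is
   r i j.  The FB sequence runs through the forward sequence on positions
   0..n and through the backward sequence on positions n..2n+1 (they share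
   G_n = G = Z_0), so its ranks contain both the forward and the backward
   ranks, and with them their diagrams.
   For strictness, filter by a vertex colouring (an edge gets the larger
   colour of its ends) the graphs G = K_4 minus the edge 13, coloured 1,2,0,0,
   and H = the triangle 023 with a pendant edge 12 and a loop at 1, coloured
   2,1,0,0.  Both have one 1-cycle born at G_1 and one born at G_2, and in
   both one 1-cycle dies entering Z_2 and one entering Z_3; but in G the
   older cycle is the one that lives longer, and in H the younger one.  The
   ranks are evaluated by computation on a boolean model of the Z/2 chain
   complexes. *)

From HB Require Import structures.
From mathcomp Require Import all_boot all_order all_algebra.
From mathcomp Require Import reals zify.
Set Implicit Arguments. Unset Strict Implicit. Unset Printing Implicit Defensive.
Import Order.TTheory GRing.Theory Num.Theory.
Local Open Scope ring_scope.
Local Notation K := 'F_2.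

Lemma F2_cases (k : K) : k = 0 \/ k = 1.
Proof. by case: k => [[|[|//]]] /= ?; [left | right]; apply: val_inj. Qed.

Section F2Span.
Variables (T : finType) (enumT : seq T).
Hypothesis mem_enumT : forall x, x \in enumT.
Local Notation vT := {ffun T -> K^o}.

Definition charv (b : T -> bool) : vT := [ffun x => (b x)%:R].
Definition xorf (b w : T -> bool) : T -> bool := fun x => b x (+) w x.

Lemma F2_addvv (v : vT) : v + v = 0.
Proof.
apply/ffunP => x; rewrite !ffunE.
by case: (F2_cases (v x)) => ->; [rewrite addr0 | apply: val_inj].
Qed.

Lemma charv_xor b w : charv (xorf b w) = charv b + charv w.
Proof.
apply/ffunP => x; rewrite !ffunE /xorf.
by case: (b x); case: (w x); rewrite /= ?addr0 ?add0r //; apply: val_inj.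
Qed.

Lemma charv_eq0 b : (charv b == 0) = all (fun x => ~~ b x) enumT.
Proof.
apply/eqP/allP => [b0 x _ | nb]; last first.
  by apply/ffunP => x; rewrite !ffunE; move: (nb x (mem_enumT x)); case: (b x).
by have := congr1 (fun v : vT => v x) b0; rewrite !ffunE; case: (b x).
Qed.

(* Membership of [charv b] in the span of [charv w :: s] is decided by
   trying both coefficients of [charv w]. *)
Fixpoint in_spanb (b : T -> bool) (s : seq (T -> bool)) : bool :=
  if s is w :: s' then in_spanb b s' || in_spanb (xorf b w) s'
  else all (fun x => ~~ b x) enumT.

Lemma in_spanbE s b : (charv b \in <<map charv s>>%VS) = in_spanb b s.
Proof.
elim: s b => [|w s IHs] b /=; first by rewrite span_nil memv0 charv_eq0.
rewrite span_cons -!IHs; apply/memv_addP/orP => [[_ /vlineP [k ->] [v s_v bE]]|].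
  case: (F2_cases k) bE => -> bE; first by left; rewrite bE scale0r add0r.
  by right; rewrite charv_xor bE scale1r addrAC F2_addvv add0r.
case=> [s_b | s_bw]; first by exists 0; [exact: mem0v | exists (charv b); rewrite ?add0r].
exists (charv w); first exact: memv_line.
by exists (charv (xorf b w)) => //; rewrite charv_xor addrCA F2_addvv addr0.
Qed.

Fixpoint span_rank (s : seq (T -> bool)) : nat :=
  if s is w :: s' then (span_rank s' + ~~ in_spanb w s')%N else 0%N.

Lemma dim_span_charv s : \dim <<map charv s>> = span_rank s.
Proof.
elim: s => [|w s IHs] /=; first by rewrite span_nil dimv0.
rewrite span_cons -in_spanbE -IHs; have [s_w | s_Nw] := boolP (_ \in _).
  by rewrite addn0; congr (\dim _); apply/addv_idPr; rewrite -memvE.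
have w_neq0 : charv w != 0 by apply: contraNneq s_Nw => ->; exact: mem0v.
rewrite dimv_disjoint_sum ?dim_vline ?w_neq0 1?addnC //.
apply/eqP; rewrite -subv0; apply/subvP => _ /memv_capP [/vlineP [k ->] s_kw].
case: (F2_cases k) s_kw => -> s_kw; first by rewrite scale0r mem0v.
by move: s_kw; rewrite scale1r (negbTE s_Nw).
Qed.

End F2Span.
Arguments charv {T}.

Section Deltas.
Variable T : finType.

Definition delta (x : T) : T -> bool := fun y => y == x.

Lemma mem_span_deltaP (l : seq T) (c : {ffun T -> K^o}) :
  reflect (forall x, x \notin l -> c x = 0)
          (c \in <<map charv (map delta l)>>%VS).
Proof.
elim: l c => [|a l IHl] c /=.
  rewrite span_nil memv0; apply: (iffP eqP) => [-> x _ | c0]; first by rewrite ffunE.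
  by apply/ffunP => x; rewrite ffunE c0.
rewrite span_cons; apply: (iffP memv_addP) => [[_ /vlineP [k ->] [v /IHl v0 ->]] x|c0].
  rewrite inE negb_or => /andP [/negbTE xa /v0].
  by rewrite !ffunE /delta /= xa scaler0 add0r.
exists (c a *: charv (delta a)); first exact: memvZ (memv_line _).
exists (c - c a *: charv (delta a)); last by rewrite addrC subrK.
apply/IHl => x xl; rewrite !ffunE /delta /=; have [-> | xa] := eqVneq x a.
  by rewrite mulr1n -[_ *: 1]/(c a * 1) mulr1 subrr.
by rewrite mulr0n scaler0 subr0 c0 // inE negb_or xa.
Qed.

Lemma sum_charv_delta (V : lmodType K) (x : T) (F : T -> V) :
  \sum_y charv (delta x) y *: F y = F x.
Proof.
rewrite (bigD1 x) //= big1 ?addr0 => [|y yx]; first by rewrite ffunE /delta eqxx scale1r.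
by rewrite ffunE /delta (negbTE yx) scale0r.
Qed.

End Deltas.
Arguments delta {T}.

Lemma dgm_of_ranks_ext N (r1 r2 : nat -> nat -> nat) :
  (forall i j, (i <= j <= N)%N -> r1 i j = r2 i j) ->
  dgm_of_ranks N r1 = dgm_of_ranks N r2.
Proof.
move=> r12; apply: boolp.funext => b; apply: boolp.funext => [[d|]] /=.
  by case: ifP => // /andP [lt_bd le_dN]; rewrite !r12 //; lia.
by case: ifP => // le_bN; rewrite !r12 //; lia.
Qed.

Lemma dgm_of_ranks_eqb N (r1 r2 : nat -> nat -> nat) :
  all (fun i => all (fun j => r1 i j == r2 i j) (iota 0 N.+1)) (iota 0 N.+1) ->
  dgm_of_ranks N r1 = dgm_of_ranks N r2.
Proof.
move=> r12; apply: dgm_of_ranks_ext => i j /andP [le_ij le_jN].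
have i_in : i \in iota 0 N.+1 by rewrite mem_iota; lia.
have j_in : j \in iota 0 N.+1 by rewrite mem_iota; lia.
by apply/eqP; move/allP: r12 => /(_ i i_in)/allP/(_ j j_in).
Qed.

(* The number of intervals of [D] that contain [[b, d]]. *)
Definition ranks_of_dgm (D : diagram) (N b d : nat) : nat :=
  absz (\sum_(0 <= b' < b.+1) (D b' None + \sum_(d.+1 <= d' < N.+1) D b' (Some d'))).

Lemma dgm_of_ranksK N r b d : (b <= d <= N)%N ->
  ranks_of_dgm (dgm_of_ranks N r) N b d = r b d.
Proof.
case/andP=> le_bd le_dN.
pose prev (i j : nat) : int := if i == 0%N then 0 else (r i.-1 j)%:Z.
have births b' : (b' <= d)%N ->
    dgm_of_ranks N r b' None + \sum_(d.+1 <= d' < N.+1) dgm_of_ranks N r b' (Some d') =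
    (r b' d)%:Z - prev b' d.
  move=> le_b'd; rewrite (telescope_sumr_eq (fun d' => prev b' d'.-1 - (r b' d'.-1)%:Z)).
  - rewrite /= (_ : (b' <= N)%N) /prev; last by lia.
    by case: eqP => _ /=; lia.
  - by rewrite ltnS.
  move=> d' /andP [lt_dd' le_d'N] /=.
  rewrite ifT; last by apply/andP; split; lia.
  by rewrite /prev /=; case: eqP => _ /=; lia.
rewrite /ranks_of_dgm (eq_big_nat _ _ (F2 := fun b' => prev b'.+1 d - prev b' d)).
  by rewrite telescope_sumr // /prev /= addn0.
by move=> b' /andP [_ lt_b'b]; rewrite births //; lia.
Qed.

Section ChainModel.
Variable g : graph.
Local Notation V := (gV g).
Local Notation E := (gE g).
Variables (Vl : seq V) (El : seq E).
Hypotheses (mem_Vl : forall v, v \in Vl) (mem_El : forall e, e \in El).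

Definition points : seq (option V) := None :: map Some Vl.

Lemma mem_points x : x \in points.
Proof. by case: x => [v|]; rewrite inE // (mem_map Some_inj) mem_Vl orbT. Qed.

(* A subquotient given by boolean predicates instead of sets, so that its
   homology ranks can be evaluated by computation. *)
Record sqb := SQB { bSV : V -> bool; bSE : E -> bool; bAV : V -> bool; bAE : E -> bool }.

Definition represents (m : sqb) (X : sq g) : Prop :=
  [/\ forall v, (v \in sqSV X) = bSV m v, forall e, (e \in sqSE X) = bSE m e,
      forall v, (v \in sqAV X) = bAV m v & forall e, (e \in sqAE X) = bAE m e].

Definition cells0 (m : sqb) : seq (option V) :=
  [seq Some v | v <- Vl & bSV m v && ~~ bAV m v] ++
  (if has (bAV m) Vl then [:: None] else [::]).
Definition cells1 (m : sqb) : seq E := [seq e <- El | bSE m e && ~~ bAE m e].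

Definition collapse (A : V -> bool) (v : V) : option V := if A v then None else Some v.
Definition bdb (A : V -> bool) (e : E) : option V -> bool :=
  xorf (delta (collapse A (gsrc e))) (delta (collapse A (gtgt e))).

Definition cycle_rank (A : V -> bool) (l : seq E) : nat :=
  (span_rank El (map delta l) - span_rank points (map (bdb A) l))%N.

(* In degree 1, the cycles of X killed by the map to Y are those supported
   on the edges collapsed in Y. *)
Definition hrankb (k : nat) (mX mY : sqb) : nat :=
  match k with
  | 0 => let B := map (bdb (bAV mY)) (cells1 mY) in
         (span_rank points ([seq delta (obind (collapse (bAV mY)) x) | x <- cells0 mX] ++ B)
          - span_rank points B)%N
  | 1 => (cycle_rank (bAV mX) (cells1 mX)
          - cycle_rank (bAV mX) [seq e <- cells1 mX | bAE mY e])%N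
  | _ => 0%N
  end.

Definition bd_fun (A : {set V}) (c : CE g) : CV g :=
  \sum_e c e *: (qv A (gsrc e) + qv A (gtgt e)).
Definition phi0_fun (Y : sq g) (c : CV g) : CV g :=
  \sum_x c x *: (if x is Some v then qv (sqAV Y) v else dV (None : option V)).
Definition phi1_fun (Y : sq g) (c : CE g) : CE g :=
  [ffun e => if e \in sqAE Y then 0 else c e].

Lemma bd_fun_linear A : linear (bd_fun A).
Proof.
move=> a c c'; rewrite /bd_fun scaler_sumr -big_split /=.
by apply: eq_bigr => e _; rewrite !ffunE scalerDl scalerA.
Qed.
HB.instance Definition _ A := GRing.isLinear.Build _ _ _ _ (bd_fun A) (bd_fun_linear A).
Lemma bdE A c : bd A c = bd_fun A c. Proof. exact: (lfunE (bd_fun A)). Qed.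

Lemma phi0_fun_linear Y : linear (phi0_fun Y).
Proof.
move=> a c c'; rewrite /phi0_fun scaler_sumr -big_split /=.
by apply: eq_bigr => x _; rewrite !ffunE scalerDl scalerA.
Qed.
HB.instance Definition _ Y := GRing.isLinear.Build _ _ _ _ (phi0_fun Y) (phi0_fun_linear Y).
Lemma phi0E Y c : phi0 Y c = phi0_fun Y c. Proof. exact: (lfunE (phi0_fun Y)). Qed.

Lemma phi1_fun_linear Y : linear (phi1_fun Y).
Proof.
move=> a c c'; apply/ffunP => e; rewrite !ffunE.
by case: (e \in sqAE Y); rewrite ?scaler0 ?addr0.
Qed.
HB.instance Definition _ Y := GRing.isLinear.Build _ _ _ _ (phi1_fun Y) (phi1_fun_linear Y).
Lemma phi1E Y c : phi1 Y c = phi1_fun Y c. Proof. exact: (lfunE (phi1_fun Y)). Qed.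

Section Generators.
Variables (A : {set V}) (Ab : V -> bool).
Hypothesis A_Ab : forall v, (v \in A) = Ab v.

Lemma qv_collapse v : qv A v = charv (delta (collapse Ab v)).
Proof. by rewrite /qv /collapse A_Ab; case: (Ab v). Qed.

Lemma bd_delta e : bd A (charv (delta e)) = charv (bdb Ab e).
Proof. by rewrite bdE /bd_fun sum_charv_delta charv_xor !qv_collapse. Qed.

Lemma map_bd_delta l :
  map (bd A) (map charv (map delta l)) = map charv (map (bdb Ab) l).
Proof. by rewrite -!map_comp; apply: eq_map => e /=; rewrite bd_delta. Qed.

Lemma dim_cap_ker_bd l :
  \dim (<<map charv (map delta l)>> :&: lker (bd A))%VS = cycle_rank Ab l.
Proof.
have := limg_ker_dim (bd A) <<map charv (map delta l)>>.
rewrite limg_span map_bd_delta !(dim_span_charv mem_points) (dim_span_charv mem_El).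
by rewrite /cycle_rank => <-; rewrite addnK.
Qed.

End Generators.

Lemma phi0_delta Y (Ab : V -> bool) x : (forall v, (v \in sqAV Y) = Ab v) ->
  phi0 Y (charv (delta x)) = charv (delta (obind (collapse Ab) x)).
Proof.
move=> A_Ab; rewrite phi0E /phi0_fun sum_charv_delta.
by case: x => [v|] //=; rewrite (qv_collapse A_Ab).
Qed.

Lemma mem_cells1 m e : (e \in cells1 m) = bSE m e && ~~ bAE m e.
Proof. by rewrite mem_filter mem_El andbT. Qed.

Lemma C1_span X m : represents m X -> C1 X = <<map charv (map delta (cells1 m))>>%VS.
Proof.
case=> _ SE _ AE; apply: eq_span => c; rewrite -map_comp.
apply/imageP/mapP => [[e]|[e e_m ->]].
  by rewrite !inE SE AE andbC -mem_cells1 => e_m ->; exists e.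
by exists e; rewrite // !inE SE AE andbC -mem_cells1.
Qed.

Lemma C0_span X m : represents m X -> C0 X = <<map charv (map delta (cells0 m))>>%VS.
Proof.
case=> SV _ AV _; rewrite /C0 /cells0 !map_cat span_cat; congr (_ + _)%VS.
  apply: eq_span => c; rewrite -!map_comp.
  apply/imageP/mapP => [[v]|[v]]; last first.
    rewrite mem_filter => /andP [/andP [Sv NAv] _] ->.
    by exists v; rewrite // !inE SV AV Sv NAv.
  by rewrite !inE SV AV andbC => v_m ->; exists v; rewrite // mem_filter v_m mem_Vl.
have -> : (sqAV X != set0) = has (bAV m) Vl.
  apply/set0Pn/hasP => [[v]|[v _]]; first by rewrite AV; exists v.
  by rewrite -AV; exists v.
by case: has; rewrite ?span_nil ?span_seq1.
Qed.

Lemma hrank0_model X Y mX mY :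
  represents mX X -> represents mY Y -> hrank 0 X Y = hrankb 0 mX mY.
Proof.
move=> rX rY; have [_ _ AV _] := rY.
rewrite /hrank /hrankb /B0 (C0_span rX) (C1_span rY) !limg_span (map_bd_delta AV).
have -> : map (phi0 Y) (map charv (map delta (cells0 mX))) =
          map charv [seq delta (obind (collapse (bAV mY)) x) | x <- cells0 mX].
  by rewrite -!map_comp; apply: eq_map => x /=; rewrite (phi0_delta _ AV).
by rewrite -span_cat -map_cat !(dim_span_charv mem_points).
Qed.

Lemma C1_cap_ker_phi1 X Y mX mY : represents mX X -> represents mY Y ->
  (C1 X :&: lker (phi1 Y))%VS =
  <<map charv (map delta [seq e <- cells1 mX | bAE mY e])>>%VS.
Proof.
move=> rX [_ _ _ AE]; apply/vspaceP => c.
rewrite memv_cap memv_ker (C1_span rX) phi1E.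
apply/andP/mem_span_deltaP => [[/mem_span_deltaP c0 /eqP/ffunP phi_c0] e|c0].
  rewrite mem_filter negb_and => /orP [NAe|]; last exact: c0.
  by have := phi_c0 e; rewrite !ffunE AE (negbTE NAe).
split.
  by apply/mem_span_deltaP => e e_m; apply: c0; rewrite mem_filter (negbTE e_m) andbF.
apply/eqP/ffunP => e; rewrite !ffunE AE; case: ifP => // AEe.
by apply: c0; rewrite mem_filter AEe.
Qed.

Lemma hrank1_model X Y mX mY :
  represents mX X -> represents mY Y -> hrank 1 X Y = hrankb 1 mX mY.
Proof.
move=> rX rY; have [_ _ AV _] := rX.
have := limg_ker_dim (phi1 Y) (Z1 X).
rewrite /hrank /hrankb /Z1 -capvA [(lker _ :&: _)%VS]capvC capvA.
rewrite (C1_cap_ker_phi1 rX rY) (dim_cap_ker_bd AV) (C1_span rX) (dim_cap_ker_bd AV).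
by move=> <-; rewrite addKn.
Qed.

Lemma hrank_model k X Y mX mY :
  represents mX X -> represents mY Y -> hrank k X Y = hrankb k mX mY.
Proof. by case: k => [|[|k]]; [exact: hrank0_model | exact: hrank1_model | ]. Qed.

Lemma pdgm_model (X : nat -> sq g) (m : nat -> sqb) N k :
  (forall p, (p <= N)%N -> represents (m p) (X p)) ->
  pdgm X N k = dgm_of_ranks N (fun i j => hrankb k (m i) (m j)).
Proof.
move=> mX; apply: dgm_of_ranks_ext => i j /andP [le_ij le_jN].
by apply: hrank_model; apply: mX; rewrite // (leq_trans le_ij).
Qed.

End ChainModel.

Lemma pdgm_restrict g (X Y : nat -> sq g) (s N M k : nat) :
  (s + N <= M)%N -> (forall i, (i <= N)%N -> X (s + i)%N = Y i) ->
  pdgm Y N k = dgm_of_ranks N (fun i j => ranks_of_dgm (pdgm X M k) M (s + i) (s + j)).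
Proof.
move=> le_sNM XY; apply: dgm_of_ranks_ext => i j /andP [le_ij le_jN].
by rewrite dgm_of_ranksK ?XY //; lia.
Qed.

Section SplitFB.
Variables (R : realType) (g : graph) (f : filtration R g).

Lemma fv_in_fvals v : fv f v \in fvals f.
Proof. by rewrite mem_sort mem_undup mem_cat map_f ?mem_enum. Qed.

Lemma fe_in_fvals e : fe f e \in fvals f.
Proof. by rewrite mem_sort mem_undup mem_cat orbC map_f ?mem_enum. Qed.

Lemma sq_nlev0 (X Y : sq g) : nlev f = 0%N -> X = Y.
Proof.
move/eqP; rewrite size_eq0 => /eqP fvals0.
have noV (v : gV g) : False by have := fv_in_fvals v; rewrite fvals0.
have eqV (A B : {set gV g}) : A = B by apply/setP => v; case: (noV v).
have eqE (A B : {set gE g}) : A = B by apply/setP => e; case: (noV (gsrc e)).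
by case: X Y => [? ? ? ?] [? ? ? ?]; congr SQ.
Qed.

Lemma le_lev_last x : x \in fvals f -> x <= lev f (nlev f).-1.
Proof.
move=> fx; rewrite /lev -(nth_index 0 fx).
have lt_x : (index x (fvals f) < nlev f)%N by rewrite index_mem.
apply: (sorted_leq_nth le_trans lexx 0 (sort_sorted le_total _)); rewrite ?inE //.
  by rewrite prednK // (leq_ltn_trans _ lt_x).
by rewrite -ltnS prednK // (leq_ltn_trans _ lt_x).
Qed.

Lemma Gsub_last : (0 < nlev f)%N -> Gsub f (nlev f).-1 = Zq f 0.
Proof.
move=> n_gt0; rewrite /Gsub /Zq subn0 !big_geq //.
by congr SQ; apply/setP => x; rewrite !inE le_lev_last ?fv_in_fvals ?fe_in_fvals.
Qed.

Lemma fb_seq_fwd i : (i <= (nlev f).-1)%N -> fb_seq f (0 + i) = fwd_seq f i.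
Proof.
case: (posnP (nlev f)) => [n0 _ | n_gt0 le_in]; first exact: sq_nlev0.
by rewrite /fb_seq (_ : (0 + i < nlev f)%N) //; lia.
Qed.

Lemma fb_seq_bwd i : (i <= nlev f)%N -> fb_seq f ((nlev f).-1 + i) = bwd_seq f i.
Proof.
case: (posnP (nlev f)) => [n0 _ | n_gt0 le_in]; first exact: sq_nlev0.
rewrite /fb_seq /bwd_seq; case: i le_in => [|i] le_in.
  by rewrite addn0 ltn_predL n_gt0 Gsub_last.
by rewrite (_ : (_ < nlev f)%N = false); [congr Zq | ]; lia.
Qed.

End SplitFB.

Definition fwd_of_fb (n : nat) (D : nat -> diagram) (k : nat) : diagram :=
  dgm_of_ranks n.-1 (fun i j => ranks_of_dgm (D k) (n + n).-1 i j).
Definition bwd_of_fb (n : nat) (D : nat -> diagram) (k : nat) : diagram :=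
  dgm_of_ranks n (fun i j => ranks_of_dgm (D k) (n + n).-1 (n.-1 + i) (n.-1 + j)).

Lemma fwd_dgm_of_fb (R : realType) g (f : filtration R g) k :
  fwd_dgm f k = fwd_of_fb (nlev f) (fb_dgm f) k.
Proof. by apply: (pdgm_restrict (s := 0)); [lia | exact: fb_seq_fwd]. Qed.

Lemma bwd_dgm_of_fb (R : realType) g (f : filtration R g) k :
  bwd_dgm f k = bwd_of_fb (nlev f) (fb_dgm f) k.
Proof. by apply: pdgm_restrict; [lia | exact: fb_seq_bwd]. Qed.

Lemma mem_bigcup_nat (T : finType) (m n : nat) (F : nat -> {set T}) x :
  (x \in \bigcup_(m <= i < n) F i) = has (fun i => x \in F i) (index_iota m n).
Proof. by elim: (index_iota m n) => [|i r IHr]; rewrite ?big_nil ?big_cons ?inE // IHr. Qed.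

Definition color_max (g : graph) (c : coloring g) (e : gE g) : nat :=
  maxn (c (gsrc e)) (c (gtgt e)).

Lemma color_max_ge (R : realType) g (c : coloring g) e :
  (c (gsrc e))%:R <= (color_max c e)%:R :> R /\ (c (gtgt e))%:R <= (color_max c e)%:R :> R.
Proof. by rewrite !ler_nat leq_maxl leq_maxr. Qed.

Definition color_filtration (R : realType) : filt_rule R := fun g c =>
  @Filtration R g (fun v => (c v)%:R) _ (color_max_ge R c).

Lemma color_filtration_equivariant (R : realType) : perm_equivariant (color_filtration R).
Proof.
move=> g h cg ch pV pE [_ [_ [c_pV pE_ends]]]; split=> [v|e] /=; first by rewrite c_pV.
by rewrite /color_max; case: (pE_ends e) => [[-> ->] | [-> ->]]; rewrite !c_pV // maxnC.
Qed.

Section ColorModel.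
Variables (R : realType) (g : graph) (c : coloring g).
Variables (Vl : seq (gV g)) (El : seq (gE g)) (n : nat).
Hypothesis color_values : perm_eq (undup (map c Vl ++ map (color_max c) El)) (iota 0 n).
Hypotheses (mem_Vl : forall v, v \in Vl) (mem_El : forall e, e \in El).
Local Notation f := (color_filtration R c).

Lemma fvals_color : fvals f = map (fun i => i%:R) (iota 0 n).
Proof.
have natr_inj : injective (fun i : nat => i%:R : R).
  by move=> a b /eqP; rewrite eqr_nat => /eqP.
have mem_colors : map c (enum (gV g)) ++ map (color_max c) (enum (gE g)) =i iota 0 n.
  move=> i; rewrite -(perm_mem color_values) mem_undup !mem_cat.
  by congr orb; apply/mapP/mapP => -[x _ ->]; exists x; rewrite ?mem_enum.
rewrite -(sort_le_id (s := map _ _)); last first.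
  by rewrite sorted_map; apply: sub_sorted (iota_sorted 0 n) => a b; rewrite /= ler_nat.
apply/perm_sort_leP/uniq_perm; rewrite ?undup_uniq ?(map_inj_uniq natr_inj) ?iota_uniq //.
have -> : [seq fv f v | v <- enum (gV g)] ++ [seq fe f e | e <- enum (gE g)] =
          map (fun i => i%:R) (map c (enum (gV g)) ++ map (color_max c) (enum (gE g))).
  by rewrite map_cat -!map_comp.
by move=> x; rewrite mem_undup; apply: eq_mem_map.
Qed.

Lemma nlev_color : nlev f = n.
Proof. by rewrite /nlev fvals_color size_map size_iota. Qed.

Lemma lev_color i : (i < n)%N -> lev f i = i%:R.
Proof. by move=> lt_in; rewrite /lev fvals_color (nth_map 0%N) ?size_iota ?nth_iota. Qed.

Definition sublevel_sqb (i : nat) : sqb g :=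
  SQB (fun v => c v <= i)%N (fun e => color_max c e <= i)%N xpred0 xpred0.

Definition ICVb (i : nat) (v : gV g) : bool :=
  (c v == i) || has (fun e => (color_max c e == i) && ((gsrc e == v) || (gtgt e == v))) El.

Definition quotient_sqb (j : nat) : sqb g :=
  SQB predT predT (fun v => has (ICVb^~ v) (index_iota (n - j) n))
      (fun e => color_max c e \in index_iota (n - j) n).

Definition fb_sqb (p : nat) : sqb g :=
  if (p < n)%N then sublevel_sqb p else quotient_sqb (p - n).+1.

Lemma represents_sublevel i : (i < n)%N -> represents (sublevel_sqb i) (Gsub f i).
Proof. by move=> lt_in; split=> x; rewrite !inE ?lev_color // ler_nat. Qed.

Lemma ICE_color i e : (i < n)%N -> (e \in ICE f i) = (color_max c e == i).
Proof. by move=> lt_in; rewrite inE lev_color // eqr_nat. Qed.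

Lemma ICV_color i v : (i < n)%N -> (v \in ICV f i) = ICVb i v.
Proof.
move=> lt_in; rewrite /ICV /ICVb !inE lev_color // eqr_nat -orbA; congr orb.
apply/orP/hasP => [[] /imsetP [e e_i ->] | [e _ /andP [e_i /orP [] /eqP <-]]].
- by exists e; rewrite ?mem_El // -ICE_color // e_i eqxx.
- by exists e; rewrite ?mem_El // -ICE_color // e_i eqxx orbT.
- by left; apply: imset_f; rewrite ICE_color.
- by right; apply: imset_f; rewrite ICE_color.
Qed.

Lemma represents_quotient j : (j <= n)%N -> represents (quotient_sqb j) (Zq f j).
Proof.
move=> le_jn; split=> x; rewrite ?inE //= nlev_color mem_bigcup_nat.
  by apply: eq_in_has => i; rewrite mem_index_iota => /andP [_ /ICV_color].
rewrite -has_pred1; apply: eq_in_has => i; rewrite mem_index_iota => /andP [_ lt_in].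
by rewrite ICE_color // eq_sym.
Qed.

Lemma represents_fb p : (0 < n)%N -> (p <= (n + n).-1)%N ->
  represents (fb_sqb p) (fb_seq f p).
Proof.
rewrite /fb_seq /fb_sqb nlev_color => n_gt0 le_p; case: ifP => [|/negbT ge_pn].
  exact: represents_sublevel.
by apply: represents_quotient; lia.
Qed.

Lemma fwd_dgm_color k : (0 < n)%N ->
  fwd_dgm f k =
  dgm_of_ranks n.-1 (fun i j => hrankb Vl El k (sublevel_sqb i) (sublevel_sqb j)).
Proof.
move=> n_gt0; rewrite /fwd_dgm nlev_color.
by apply: (pdgm_model mem_Vl mem_El) => p le_p; apply: represents_sublevel; lia.
Qed.

Lemma bwd_dgm_color k :
  bwd_dgm f k =
  dgm_of_ranks n (fun i j => hrankb Vl El k (quotient_sqb i) (quotient_sqb j)).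
Proof.
rewrite /bwd_dgm nlev_color.
by apply: (pdgm_model mem_Vl mem_El) => p /represents_quotient.
Qed.

Lemma fb_dgm_color k : (0 < n)%N ->
  fb_dgm f k = dgm_of_ranks (n + n).-1 (fun i j => hrankb Vl El k (fb_sqb i) (fb_sqb j)).
Proof.
move=> n_gt0; rewrite /fb_dgm nlev_color.
by apply: (pdgm_model mem_Vl mem_El) => p /(represents_fb n_gt0).
Qed.

End ColorModel.

(* Built with [modn] rather than [insub], so that it reduces under [vm_compute]. *)
Definition ord_mod (m k : nat) : 'I_m.+1 := Ordinal (ltn_pmod k (ltn0Sn m)).

Lemma mem_ord_mod_iota m (i : 'I_m.+1) : i \in map (ord_mod m) (iota 0 m.+1).
Proof.
by apply/mapP; exists (val i); rewrite ?mem_iota //=; apply: val_inj; rewrite /= modn_small.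
Qed.

Definition graph_of_edges (src tgt : seq nat) : graph :=
  @Graph 'I_4 'I_5 (fun e => ord_mod 3 (nth 0 src e)) (fun e => ord_mod 3 (nth 0 tgt e)).

Definition exG : graph := graph_of_edges [:: 0; 0; 0; 1; 2] [:: 1; 2; 3; 2; 3].
Definition exH : graph := graph_of_edges [:: 0; 0; 1; 1; 2] [:: 2; 3; 1; 2; 3].
Definition colG : coloring exG := fun v => nth 0 [:: 1; 2; 0; 0] v.
Definition colH : coloring exH := fun v => nth 0 [:: 2; 1; 0; 0] v.

Definition ex_vertices : seq 'I_4 := map (ord_mod 3) (iota 0 4).
Definition ex_edges : seq 'I_5 := map (ord_mod 4) (iota 0 5).

Lemma colG_values :
  perm_eq (undup (map colG ex_vertices ++ map (color_max colG) ex_edges)) (iota 0 3).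
Proof. by vm_compute. Qed.

Lemma colH_values :
  perm_eq (undup (map colH ex_vertices ++ map (color_max colH) ex_edges)) (iota 0 3).
Proof. by vm_compute. Qed.

Lemma fb_strictly_finer (R : realType) :
  exists (g h : graph) (cg : coloring g) (ch : coloring h) (F : filt_rule R),
    perm_equivariant F /\
    (forall k, fwd_dgm (F g cg) k = fwd_dgm (F h ch) k) /\
    (forall k, bwd_dgm (F g cg) k = bwd_dgm (F h ch) k) /\
    (exists k, fb_dgm (F g cg) k <> fb_dgm (F h ch) k).
Proof.
have memV := @mem_ord_mod_iota 3; have memE := @mem_ord_mod_iota 4.
exists exG, exH, colG, colH, (color_filtration R).
split; first exact: color_filtration_equivariant.
split=> [k|].
  rewrite (fwd_dgm_color R colG_values memV memE k isT).
  rewrite (fwd_dgm_color R colH_values memV memE k isT).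
  by apply: dgm_of_ranks_eqb; case: k => [|[|k]]; vm_compute.
split=> [k|].
  rewrite (bwd_dgm_color R colG_values memV memE k).
  rewrite (bwd_dgm_color R colH_values memV memE k).
  by apply: dgm_of_ranks_eqb; case: k => [|[|k]]; vm_compute.
exists 1%N; rewrite (fb_dgm_color R colG_values memV memE 1 isT).
rewrite (fb_dgm_color R colH_values memV memE 1 isT).
by move/(congr1 (fun D : diagram => D 1%N (Some 4%N))); vm_compute.
Qed.

Theorem theorem1 (R : realType) :
  (* forward and backward diagrams are determined by the FB diagrams
     (given the number n+1 of distinct filtration values) *)
  (exists Phi : nat -> (nat -> diagram) -> nat -> diagram,
     forall (g : graph) (f : filtration R g) (k : nat),
       fwd_dgm f k = Phi (nlev f) (fb_dgm f) k) /\
  (exists Psi : nat -> (nat -> diagram) -> nat -> diagram,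
     forall (g : graph) (f : filtration R g) (k : nat),
       bwd_dgm f k = Psi (nlev f) (fb_dgm f) k) /\
  (* FB is strictly more expressive than forward + backward *)
  (exists (g h : graph) (cg : coloring g) (ch : coloring h) (F : filt_rule R),
     perm_equivariant F /\
     (forall k, fwd_dgm (F g cg) k = fwd_dgm (F h ch) k) /\
     (forall k, bwd_dgm (F g cg) k = bwd_dgm (F h ch) k) /\
     (exists k, fb_dgm (F g cg) k <> fb_dgm (F h ch) k)).
Proof.
split; first by exists fwd_of_fb => g f k; exact: fwd_dgm_of_fb.
split; first by exists bwd_of_fb => g f k; exact: bwd_dgm_of_fb.
exact: fb_strictly_finer.
Qed.
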